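(* Let $A\in\mathbb{C}^{m\times n}$. Then the following are equivalent: (1) $A^{\mathfrak{m}}$ exists; (2) $\mathrm{rank}(AA^{\sim})=\mathrm{rank}(A^{\sim}A)=\mathrm{rank}(A)$; (3) $\mathrm{rank}(A^{\sim}AA^{\sim})=\mathrm{rank}(A)$; (4) $A\mathcal{R}(A^{\sim})\oplus\mathcal{N}(A^{\sim})=\mathbb{C}^m$.
   Context: For a positive integer $k$, the Minkowski metric matrix of order $k$ is $G_k=\mathrm{diag}(1,-I_{k-1})$ (with $G_1=(1)$). For $A\in\mathbb{C}^{m\times n}$, the Minkowski adjoint is $A^{\sim}=G_nA^*G_m$, where $A^*$ is the conjugate transpose. The Minkowski inverse of $A$, denoted $A^{\mathfrak{m}}$, is a matrix $X\in\mathbb{C}^{n\times m}$ with $AXA=A$, $XAX=X$, $(AX)^{\sim}=AX$, $(XA)^{\sim}=XA$ (unique if it exists). $\mathcal{R}(\cdot)$, $\mathcal{N}(\cdot)$ denote range and null space, and $A\mathcal{R}(A^{\sim})=\{Av: v\in\mathcal{R}(A^{\sim})\}$. *)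

From HB Require Import structures.
From mathcomp Require Import all_boot all_order all_algebra.
From mathcomp Require Import reals.
From mathcomp.real_closed Require Import complex.
Set Implicit Arguments. Unset Strict Implicit. Unset Printing Implicit Defensive.
Import Order.TTheory GRing.Theory Num.Theory.
Local Open Scope ring_scope.

Section Minkowski.
Variable C : numClosedFieldType.

Definition mink_metric (k : nat) : 'M[C]_k :=
  \matrix_(i < k, j < k)
    (if i == j then (if (i : nat) == 0%N then 1 else -1) else 0).

Definition conjtr (m n : nat) (A : 'M[C]_(m, n)) : 'M[C]_(n, m) :=
  map_mx Num.conj (A^T).

Definition madj (m n : nat) (A : 'M[C]_(m, n)) : 'M[C]_(n, m) :=
  mink_metric n *m conjtr A *m mink_metric m.

Definition is_minkowski_inverse (m n : nat) (A : 'M[C]_(m, n))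
    (X : 'M[C]_(n, m)) : Prop :=
  [/\ A *m X *m A = A, X *m A *m X = X,
      madj (A *m X) = A *m X & madj (X *m A) = X *m A].

Definition range_of (p q : nat) (B : 'M[C]_(p, q)) (y : 'cV[C]_p) : Prop :=
  exists w : 'cV[C]_q, y = B *m w.

Definition null_of (p q : nat) (B : 'M[C]_(p, q)) (x : 'cV[C]_q) : Prop :=
  B *m x = 0.

Definition image_of_range (m n : nat) (A : 'M[C]_(m, n)) (y : 'cV[C]_m) : Prop :=
  exists v : 'cV[C]_n, range_of (madj A) v /\ y = A *m v.

Definition direct_sum_whole (p : nat) (S T : 'cV[C]_p -> Prop) : Prop :=
  (forall x : 'cV[C]_p, exists u v, S u /\ T v /\ x = u + v) /\
  (forall x : 'cV[C]_p, S x -> T x -> x = 0).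

End Minkowski.

(* The Minkowski adjoint A~ = G A^* G is an involutive, rank-preserving
anti-automorphism of the matrix algebra, so the usual Moore-Penrose theory goes
through with A~ in place of A^*.  In particular, when rank (A~ A A~) = rank A
the matrix A~ lies in both the row and the column space of A~ A A~, and
Zlobec's formula X = A~ (A~ A A~)^- A~ is a Minkowski inverse for any inner
inverse (A~ A A~)^-.  Conversely a Minkowski inverse X makes A X the projector
onto A R(A~) along N(A~), and applying A~ to that splitting of C^m shows that
R(A~) = R(A~ A A~). *)
From HB Require Import structures.
From mathcomp Require Import all_boot all_order all_algebra.
From mathcomp Require Import reals.
From mathcomp.real_closed Require Import complex.
Import Order.TTheory GRing.Theory Num.Theory.
Local Open Scope ring_scope.
Set Implicit Arguments. Unset Strict Implicit.

Section RankFactor.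
Variable F : fieldType.

Lemma mxrank_mull_eqP m n p (A : 'M[F]_(m, n)) (B : 'M[F]_(p, m)) :
  \rank (B *m A) = \rank A <-> exists W : 'M_(m, p), A = W *m B *m A.
Proof.
split=> [rBA | [W eA]].
  have /submxP[W eA] : (A <= B *m A)%MS.
    by rewrite -(mxrank_leqif_sup (submxMl B A)).2 rBA.
  by exists W; rewrite mulmxA in eA.
apply/eqP; rewrite eqn_leq mxrankM_maxr /=.
by rewrite {1}eA -mulmxA mxrankM_maxr.
Qed.

Lemma mxrank_mulr_eqP m n p (A : 'M[F]_(m, n)) (B : 'M[F]_(n, p)) :
  \rank (A *m B) = \rank A <-> exists W : 'M_(p, n), A = A *m B *m W.
Proof.
rewrite -mxrank_tr -[\rank A]mxrank_tr trmx_mul mxrank_mull_eqP.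
split=> -[W eA]; exists W^T; apply: trmx_inj.
  by rewrite !trmx_mul trmxK mulmxA -eA.
by rewrite {1}eA !trmx_mul mulmxA.
Qed.

Lemma mxrank_mulmx_sandwich m n (A : 'M[F]_(m, n)) (B : 'M[F]_(n, m)) :
  \rank (A *m B) = \rank A -> \rank (B *m A) = \rank A ->
  \rank (B *m A *m B) = \rank A.
Proof.
move=> rAB /mxrank_mull_eqP[W eA].
have eAB : A *m B = W *m (B *m A *m B) by rewrite !mulmxA -eA.
rewrite -rAB; apply/eqP; rewrite eqn_leq {2}eAB mxrankM_maxr andbT.
by rewrite -mulmxA mxrankM_maxr.
Qed.

Lemma mxrank_leq_col_range m n p (B : 'M[F]_(m, n)) (K : 'M[F]_(m, p)) :
  (forall x : 'cV_n, exists w : 'cV_p, B *m x = K *m w) ->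
  (\rank B <= \rank K)%N.
Proof.
move=> BK; rewrite -mxrank_tr -[\rank K]mxrank_tr; apply: mxrankS.
apply/row_subP=> i; rewrite -tr_col colE.
by have [w ->] := BK (delta_mx i 0); rewrite trmx_mul submxMl.
Qed.

End RankFactor.

Section Zlobec.
Variables (F : fieldType) (m n : nat) (A : 'M[F]_(m, n)) (B : 'M[F]_(n, m)).

(* Zlobec's formula A^+ = A^H (A^H A A^H)^- A^H, with A^H replaced by B. *)
Definition zlobec_inv : 'M[F]_(n, m) := B *m pinvmx (B *m A *m B) *m B.

Hypothesis rBAB : \rank (B *m A *m B) = \rank B.

Lemma mulmx_zlobecK : B *m A *m zlobec_inv = B.
Proof.
have [U eB] : exists U, B = B *m (A *m B) *m U.
  by apply/mxrank_mulr_eqP; rewrite mulmxA.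
rewrite mulmxA in eB.
(* pinvmx unfolds to a matrix product, so it is abstracted before mulmxA. *)
rewrite /zlobec_inv; move: (pinvmx _) (mulmxKpV (submx_refl (B *m A *m B))).
by move=> P KPK; rewrite !mulmxA [X in _ *m X = _]eB mulmxA KPK -eB.
Qed.

Lemma zlobec_mulmxK : zlobec_inv *m A *m B = B.
Proof.
have [V eB] := (mxrank_mull_eqP B (B *m A)).1 rBAB.
have sBK : (B <= B *m A *m B)%MS by apply/submxP; exists V; rewrite {1}eB !mulmxA.
rewrite /zlobec_inv; move: (pinvmx _) (mulmxKpV sBK) => P BPK.
by rewrite -[RHS]BPK !mulmxA.
Qed.

Lemma zlobec_inv_reflexive : zlobec_inv *m A *m zlobec_inv = zlobec_inv.
Proof.
have -> : zlobec_inv *m A *m zlobec_inv =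
          B *m pinvmx (B *m A *m B) *m (B *m A *m zlobec_inv).
  by rewrite /zlobec_inv !mulmxA.
by rewrite mulmx_zlobecK.
Qed.

Lemma zlobec_inv_inner : \rank (B *m A) = \rank A ->
  A *m zlobec_inv *m A = A.
Proof.
case/mxrank_mull_eqP=> W eA.
have -> : A *m zlobec_inv *m A = W *m (B *m A *m zlobec_inv) *m A.
  by rewrite {1}eA !mulmxA.
by rewrite mulmx_zlobecK -eA.
Qed.

End Zlobec.

Section MinkowskiAdjoint.
Variable C : numClosedFieldType.

Lemma mink_metric_sqr k : mink_metric C k *m mink_metric C k = 1%:M.
Proof.
apply/matrixP=> i j; rewrite !mxE (bigD1 i) //= big1 => [|l /negbTE nli].
  rewrite !mxE eqxx addr0; have [_|_] := eqVneq i j; last by rewrite mulr0.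
  by case: ifP; rewrite ?mulr1 ?mulrNN ?mulr1.
by rewrite !mxE eq_sym nli mul0r.
Qed.

Lemma conjtrM m n p (A : 'M[C]_(m, n)) (B : 'M[C]_(n, p)) :
  conjtr (A *m B) = conjtr B *m conjtr A.
Proof. by rewrite /conjtr trmx_mul map_mxM. Qed.

Lemma conjtrK m n (A : 'M[C]_(m, n)) : conjtr (conjtr A) = A.
Proof. by apply/matrixP=> i j; rewrite !mxE conjCK. Qed.

Lemma conjtr_mink_metric k : conjtr (mink_metric C k) = mink_metric C k.
Proof.
apply/matrixP=> i j; rewrite !mxE eq_sym.
have [->|_] := eqVneq i j; last by rewrite rmorph0.
by case: ifP; rewrite ?rmorphN rmorph1.
Qed.

Lemma madjM m n p (A : 'M[C]_(m, n)) (B : 'M[C]_(n, p)) :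
  madj (A *m B) = madj B *m madj A.
Proof.
rewrite /madj conjtrM !mulmxA -[_ *m mink_metric C n *m mink_metric C n]mulmxA.
by rewrite mink_metric_sqr mulmx1.
Qed.

Lemma madjK m n (A : 'M[C]_(m, n)) : madj (madj A) = A.
Proof.
rewrite /madj !conjtrM !conjtr_mink_metric conjtrK !mulmxA mink_metric_sqr.
by rewrite mul1mx -mulmxA mink_metric_sqr mulmx1.
Qed.

Lemma mxrank_madj m n (A : 'M[C]_(m, n)) : \rank (madj A) = \rank A.
Proof.
have le_rank p q (B : 'M[C]_(p, q)) : (\rank (madj B) <= \rank B)%N.
  rewrite /madj (leq_trans (mxrankM_maxl _ _)) // (leq_trans (mxrankM_maxr _ _)) //.
  by rewrite /conjtr mxrank_map mxrank_tr.
by apply/eqP; rewrite eqn_leq le_rank -{1}(madjK A) le_rank.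
Qed.

Lemma madj_mulmxr_selfadj m n (A : 'M[C]_(m, n)) (X : 'M[C]_(n, m)) :
  madj A *m (A *m X) = madj A -> madj (A *m X) = A *m X.
Proof.
move=> fixA; have PA : madj (A *m X) *m A = A.
  by rewrite -[RHS](madjK A) -[in RHS]fixA [in RHS]madjM madjK.
by rewrite {1}madjM -fixA mulmxA -madjM mulmxA PA.
Qed.

Lemma madj_mulmxl_selfadj m n (A : 'M[C]_(m, n)) (X : 'M[C]_(n, m)) :
  X *m A *m madj A = madj A -> madj (X *m A) = X *m A.
Proof.
move=> fixA; have AP : A *m madj (X *m A) = A.
  by rewrite -[RHS](madjK A) -[in RHS]fixA [in RHS]madjM madjK.
by rewrite {1}madjM -fixA -mulmxA -madjM -mulmxA AP.
Qed.

End MinkowskiAdjoint.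

Section MinkowskiInverse.
Variables (C : numClosedFieldType) (m n : nat) (A : 'M[C]_(m, n)).

Lemma minkowski_inverse_rank X : is_minkowski_inverse A X ->
  \rank (A *m madj A) = \rank A /\ \rank (madj A *m A) = \rank A.
Proof.
case=> AXA _ AXsa XAsa; split.
  by apply/mxrank_mulr_eqP; exists (madj X); rewrite -mulmxA -madjM XAsa mulmxA AXA.
by apply/mxrank_mull_eqP; exists (madj X); rewrite -madjM AXsa AXA.
Qed.

Lemma minkowski_inverse_direct_sum X : is_minkowski_inverse A X ->
  direct_sum_whole (image_of_range A) (null_of (madj A)).
Proof.
case=> AXA XAX AXsa XAsa.
have fixA : madj A *m (A *m X) = madj A by rewrite -AXsa -madjM AXA.
have eX : X = madj A *m (madj X *m X) by rewrite mulmxA -madjM XAsa XAX.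
split=> [x | _ [v [[w ->] ->]] Bu].
  exists (A *m X *m x), (x - A *m X *m x); split; last split.
  - exists (X *m x); split; last by rewrite mulmxA.
    by exists (madj X *m X *m x); rewrite {1}eX !mulmxA.
  - by rewrite /null_of mulmxBr mulmxA fixA subrr.
  - by rewrite addrC subrK.
(* u = A X u = (A X)~ u = X~ A~ u *)
have -> : A *m (madj A *m w) = madj X *m (madj A *m (A *m (madj A *m w))).
  by rewrite [RHS]mulmxA -madjM AXsa !mulmxA AXA.
by rewrite Bu mulmx0.
Qed.

Lemma minkowski_inverse_zlobec :
  \rank (madj A *m A *m madj A) = \rank A ->
  is_minkowski_inverse A (zlobec_inv A (madj A)).
Proof.
move=> rBAB; have rBAB_madj : \rank (madj A *m A *m madj A) = \rank (madj A).
  by rewrite mxrank_madj.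
have rBA : \rank (madj A *m A) = \rank A.
  by apply/eqP; rewrite eqn_leq mxrankM_maxr -{1}rBAB mxrankM_maxl.
split.
- exact: zlobec_inv_inner rBAB_madj rBA.
- exact: zlobec_inv_reflexive rBAB_madj.
- by apply: madj_mulmxr_selfadj; rewrite mulmxA mulmx_zlobecK.
- exact/madj_mulmxl_selfadj/(zlobec_mulmxK rBAB_madj).
Qed.

Lemma direct_sum_rank :
  direct_sum_whole (image_of_range A) (null_of (madj A)) ->
  \rank (madj A *m A *m madj A) = \rank A.
Proof.
case=> cover _; rewrite -(mxrank_madj A); apply/eqP.
rewrite eqn_leq (leq_trans (mxrankM_maxl _ _) (mxrankM_maxl _ _)) /=.
apply: mxrank_leq_col_range => x.
have [_ [v [[_ [[w ->] ->]] [Bv ->]]]] := cover x.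
by exists w; rewrite mulmxDr Bv addr0 !mulmxA.
Qed.

End MinkowskiInverse.

Local Open Scope complex_scope.

Theorem theorem5p1 (R : realType) (m n : nat) (A : 'M[R[i]]_(m, n)) :
  [<-> exists X : 'M[R[i]]_(n, m), is_minkowski_inverse A X;
       \rank (A *m madj A) = \rank A /\ \rank (madj A *m A) = \rank A;
       \rank (madj A *m A *m madj A) = \rank A;
       direct_sum_whole (image_of_range A) (null_of (madj A))].
Proof.
tfae=> [[X AX] | [rAB rBA] | rBAB | ds].
- exact: minkowski_inverse_rank AX.
- exact: mxrank_mulmx_sandwich.
- exact: minkowski_inverse_direct_sum (minkowski_inverse_zlobec rBAB).
- exact: ex_intro _ _ (minkowski_inverse_zlobec (direct_sum_rank ds)).
Qed.
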